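(* Let $S\subseteq\mathbb{R}^n\times\mathbb{R}^m$ be convex. A set $\bar S\subseteq S$ is a solution of the convex projection (CP) if and only if it is a solution of the multi-objective problem (MOCP).
   Context: (CP): compute $Y=\{y\in\mathbb{R}^m:\exists x,(x,y)\in S\}$. A set $\bar S\subseteq S$ is a solution of (CP) if $Y\subseteq\operatorname{cl}\operatorname{conv}\operatorname{proj}_y[\bar S]$, where $\operatorname{proj}_y(x,y)=y$. (MOCP): minimize $P(x,y)=(y,-\mathbf{1}^\top y)$ w.r.t. $\le_{\mathbb{R}^{m+1}_+}$ subject to $(x,y)\in S$ ($\mathbf{1}\in\mathbb{R}^m$ all-ones), with upper image $\mathcal{P}=\operatorname{cl}(P[S]+\mathbb{R}^{m+1}_+)$. A set $\bar S\subseteq S$ is a solution of (MOCP) if $\mathcal{P}=\operatorname{cl}\operatorname{conv}(P[\bar S]+\mathbb{R}^{m+1}_+)$ (all feasible points are minimizers of (MOCP), so this coincides with the general notion of a solution as an infimizer consisting of minimizers). *)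

From HB Require Import structures.
From mathcomp Require Import all_boot all_order all_algebra.
From mathcomp Require Import all_classical all_reals topology normedtype.
Set Implicit Arguments. Unset Strict Implicit. Unset Printing Implicit Defensive.
Import Order.TTheory GRing.Theory Num.Theory.
Import numFieldNormedType.Exports.
Local Open Scope classical_set_scope.
Local Open Scope ring_scope.

Section Defs.
Variable R : realType.

Definition convexS (V : lmodType R) (A : set V) :=
  forall x y (t : R), A x -> A y -> 0 <= t -> t <= 1 -> A (t *: x + (1 - t) *: y).

Definition convexS2 (n m : nat) (S : set ('rV[R]_n * 'rV[R]_m)) :=
  forall x y (t : R), S x -> S y -> 0 <= t -> t <= 1 ->
    S (t *: x.1 + (1 - t) *: y.1, t *: x.2 + (1 - t) *: y.2).

Definition conv_hull (V : lmodType R) (A : set V) : set V :=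
  \bigcap_(C in [set C : set V | convexS C /\ A `<=` C]) C.

Definition msum (V : lmodType R) (A B : set V) : set V :=
  [set z | exists a b, A a /\ B b /\ z = a + b].

Definition orthant (k : nat) : set 'rV[R]_k := [set v | forall i, 0 <= v ord0 i].
Arguments orthant k : clear implicits.

Definition projY (n m : nat) (S : set ('rV[R]_n * 'rV[R]_m)) : set 'rV[R]_m :=
  [set y | exists x, S (x, y)].

Definition solCP (n m : nat) (S Sbar : set ('rV[R]_n * 'rV[R]_m)) :=
  Sbar `<=` S /\ projY S `<=` closure (conv_hull (snd @` Sbar)).

Definition Pobj {n m : nat} (xy : 'rV[R]_n * 'rV[R]_m) : 'rV[R]_(m + 1)%N :=
  row_mx xy.2 (\row_(j < 1) - \sum_(i < m) xy.2 ord0 i).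

Definition upper_image (n m : nat) (S : set ('rV[R]_n * 'rV[R]_m)) : set 'rV[R]_(m + 1)%N :=
  closure (msum (Pobj @` S) (orthant (m + 1)%N)).

Definition solMOCP (n m : nat) (S Sbar : set ('rV[R]_n * 'rV[R]_m)) :=
  Sbar `<=` S /\
  upper_image S = closure (conv_hull (msum (Pobj @` Sbar) (orthant (m + 1)%N))).

End Defs.

From HB Require Import structures.
From mathcomp Require Import all_boot all_order all_algebra.
From mathcomp Require Import all_classical all_reals topology normedtype.
From mathcomp Require Import lra.
Set Implicit Arguments. Unset Strict Implicit. Unset Printing Implicit Defensive.
Import Order.TTheory GRing.Theory Num.Theory.
Import numFieldNormedType.Exports.
Local Open Scope classical_set_scope.
Local Open Scope ring_scope.

(* Write obj c := (c, -1^T c), so that Pobj (x, y) = obj y; let Q := P[S] + R^(m+1)_+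
   (its closure is the upper image), B := conv (P[Sbar] + R^(m+1)_+) and Ybar := snd[Sbar].
   - (CP => MOCP) obj is linear and S is convex, so Q is convex; it contains the
     generators of B, hence cl B <= cl Q.  Conversely, for obj y + k in Q we have
     y in cl (conv Ybar); the affine map c |-> obj c + k sends conv Ybar into B and is
     Lipschitz for the max-norm, so obj y + k lies in cl B.
   - (MOCP => CP) For (x, y) in S, obj y lies in Q <= cl B, and B <= obj[conv Ybar] + R^(m+1)_+.
     If obj y is close to obj c + k with k >= 0 then y is close to c: each y_j - c_j is
     bounded below by the first m coordinates, and their sum is bounded above by the last. *)

Section ConvexHull.
Variable R : realType.

Section Hull.
Variable V : lmodType R.

Lemma conv_hull_sub (A : set V) : A `<=` conv_hull A.
Proof. by move=> x Ax W [_ AW]; apply: AW. Qed.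

Lemma conv_hull_min (A W : set V) : convexS W -> A `<=` W -> conv_hull A `<=` W.
Proof. by move=> cW AW x; apply. Qed.

Lemma conv_hull_convex (A : set V) : convexS (conv_hull A).
Proof.
move=> x y t hx hy t0 t1 W /= WA; have [cW _] := WA.
by apply: cW => //; [apply: hx | apply: hy].
Qed.

End Hull.

Section AffineMaps.
Variables U V : lmodType R.
Variable f : U -> V.
Hypothesis f_lin : forall (a b : R) u v, f (a *: u + b *: v) = a *: f u + b *: f v.

Lemma convex_affine_preimage (B : set V) (k : V) :
  convexS B -> convexS [set u | B (f u + k)].
Proof.
move=> cB u v t Bu Bv t0 t1 /=.
have := cB _ _ t Bu Bv t0 t1.
by rewrite !scalerDr addrACA -scalerDl subrKC scale1r f_lin.
Qed.

Lemma convex_msum_image (A : set U) (K : set V) :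
  convexS A -> convexS K -> convexS (msum (f @` A) K).
Proof.
move=> cA cK _ _ t [_ [k [[a Aa <-] [Kk ->]]]] [_ [k' [[a' Aa' <-] [Kk' ->]]]] t0 t1.
exists (f (t *: a + (1 - t) *: a')), (t *: k + (1 - t) *: k'); split; last split.
- by exists (t *: a + (1 - t) *: a') => //; apply: cA.
- exact: cK.
- by rewrite f_lin !scalerDr addrACA.
Qed.

End AffineMaps.

Lemma orthant_convex k : convexS (@orthant R k).
Proof.
move=> x y t hx hy t0 t1 i; rewrite !mxE.
by apply: addr_ge0; apply: mulr_ge0; rewrite ?subr_ge0.
Qed.

End ConvexHull.

Section Objective.
Variables (R : realType) (m : nat).

Lemma mx_addE k l (M N : 'M[R]_(k, l)) i j : (M + N) i j = M i j + N i j.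
Proof. by rewrite !mxE. Qed.

Lemma mx_combE k l (a b : R) (M N : 'M[R]_(k, l)) i j :
  (a *: M + b *: N) i j = a * M i j + b * N i j.
Proof. by rewrite !mxE. Qed.

Definition obj (c : 'rV[R]_m) : 'rV[R]_(m + 1) :=
  row_mx c (\row_(j < 1) - \sum_(i < m) c ord0 i).

Lemma PobjE n (xy : 'rV[R]_n * 'rV[R]_m) : Pobj xy = obj xy.2.
Proof. by []. Qed.

Lemma ord_split_last (i : 'I_(m + 1)) : (exists j, i = lshift 1 j) \/ i = rshift m ord0.
Proof.
case: (splitP i) => [j eq|k eq]; first by left; exists j; apply: val_inj.
by right; apply: val_inj => /=; rewrite eq (ord1 k) addn0.
Qed.

Lemma obj_lshift (c : 'rV[R]_m) j : obj c ord0 (lshift 1 j) = c ord0 j.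
Proof. by rewrite row_mxEl. Qed.

Lemma obj_rshift (c : 'rV[R]_m) : obj c ord0 (rshift m ord0) = - \sum_(i < m) c ord0 i.
Proof. by rewrite row_mxEr mxE. Qed.

Lemma obj_lin (a b : R) (u v : 'rV[R]_m) : obj (a *: u + b *: v) = a *: obj u + b *: obj v.
Proof.
apply/rowP => i; rewrite mx_combE.
case: (ord_split_last i) => [[j ->]|->].
  by rewrite !obj_lshift mx_combE.
rewrite !obj_rshift; under eq_bigr do rewrite mx_combE.
by rewrite big_split /= -!mulr_sumr opprD !mulrN.
Qed.

Lemma obj_near (d : R) (u v : 'rV[R]_m) (k : 'rV[R]_(m + 1)) :
  0 < d -> (forall j, `|u ord0 j - v ord0 j| < d) ->
  forall i, `|(obj u + k) ord0 i - (obj v + k) ord0 i| < m.+1%:R * d.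
Proof.
move=> d0 uv i; rewrite !mx_addE opprD addrACA subrr addr0 -natr1 mulrDl mul1r.
have md : 0 <= m%:R * d by rewrite mulr_ge0 // ltW.
case: (ord_split_last i) => [[j ->]|->].
  by rewrite !obj_lshift; have := uv j; lra.
rewrite !obj_rshift -opprD normrN -sumrB.
apply: (le_lt_trans (ler_norm_sum _ _ _)).
have : \sum_(j < m) `|u ord0 j - v ord0 j| <= m%:R * d.
  rewrite mulr_natl -[m in _ *+ m]card_ord -sumr_const.
  by apply: ler_sum => j _; apply/ltW.
lra.
Qed.

Lemma obj_recover (d : R) (y c : 'rV[R]_m) (k : 'rV[R]_(m + 1)) :
  @orthant R (m + 1) k -> (forall i, `|obj y ord0 i - (obj c + k) ord0 i| < d) ->
  forall j, `|y ord0 j - c ord0 j| < m.+1%:R * d.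
Proof.
move=> k0 near j.
have below l : - d < y ord0 l - c ord0 l.
  have := near (lshift 1 l); rewrite mx_addE !obj_lshift ltr_norml => /andP[lo _].
  have := k0 (lshift 1 l); lra.
have above : \sum_(l < m) (y ord0 l - c ord0 l) < d.
  have := near (rshift m ord0); rewrite mx_addE !obj_rshift sumrB ltr_norml => /andP[lo _].
  have := k0 (rshift m ord0); lra.
have d_gt0 : 0 < d := le_lt_trans (normr_ge0 _) (near (rshift m ord0)).
have single : y ord0 j - c ord0 j + d <= \sum_(l < m) (y ord0 l - c ord0 l + d).
  rewrite (bigD1 j) //= lerDl; apply: sumr_ge0 => l _.
  by have := below l; lra.
have total : \sum_(l < m) (y ord0 l - c ord0 l + d) = \sum_(l < m) (y ord0 l - c ord0 l) + m%:R * d.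
  by rewrite big_split /= sumr_const card_ord mulr_natl.
have md : 0 <= m%:R * d by rewrite mulr_ge0 // ltW.
have := below j; rewrite ltr_norml -natr1 mulrDl mul1r => bj; apply/andP; split; lra.
Qed.

End Objective.
Arguments obj {R m}.

Section Closure.
Variable R : realType.

Lemma ball_rowP k (x y : 'rV[R]_k) (e : R) :
  0 < e -> ball x e y <-> forall i, `|x ord0 i - y ord0 i| < e.
Proof.
move=> e0; rewrite /ball /= /mx_ball; split; first by move=> [_ xy] i; apply: xy.
by move=> xy; split => // i j; rewrite (ord1 i); apply: xy.
Qed.

Lemma closure_rowP k (A : set 'rV[R]_k) x :
  closure A x <-> forall e : R, 0 < e -> exists2 a, A a & forall i, `|x ord0 i - a ord0 i| < e.
Proof.
split.
  move=> clx e e0; have [a [Aa xa]] := clx _ (nbhsx_ballx x e e0).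
  by exists a => //; apply/ball_rowP.
move=> approx B /nbhs_ballP [e /= e0 xeB].
have [a Aa xa] := approx e e0.
by exists a; split => //; apply: xeB; apply/ball_rowP.
Qed.

Lemma closure_transfer k l (A : set 'rV[R]_k) (B : set 'rV[R]_l)
    (x : 'rV[R]_k) (y : 'rV[R]_l) (C : R) :
  0 < C ->
  (forall d, 0 < d -> forall a, A a -> (forall i, `|x ord0 i - a ord0 i| < d) ->
     exists2 b, B b & forall j, `|y ord0 j - b ord0 j| < C * d) ->
  closure A x -> closure B y.
Proof.
move=> C0 transfer /closure_rowP clx; apply/closure_rowP => e e0.
have d0 : 0 < e / C by rewrite divr_gt0.
have [a Aa xa] := clx _ d0.
by rewrite -[e](mulfVK (lt0r_neq0 C0)) mulrC; apply: transfer xa.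
Qed.

End Closure.

Section Solutions.
Variables (R : realType) (n m : nat).
Variables (S Sbar : set ('rV[R]_n * 'rV[R]_m)).
Hypothesis S_convex : convexS2 S.
Hypothesis Sbar_sub : Sbar `<=` S.

Local Notation Q := (msum (@Pobj R n m @` S) (@orthant R (m + 1))).
Local Notation B := (conv_hull (msum (@Pobj R n m @` Sbar) (@orthant R (m + 1)))).
Local Notation Ybar := (snd @` Sbar).

Lemma Pobj_lin (a b : R) (u v : 'rV[R]_n * 'rV[R]_m) :
  Pobj (a *: u + b *: v) = a *: Pobj u + b *: Pobj v.
Proof. exact: obj_lin. Qed.

Lemma B_sub_Q : B `<=` Q.
Proof.
apply: conv_hull_min.
  exact: (@convex_msum_image R _ _ _ Pobj_lin S _ S_convex (@orthant_convex R _)).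
move=> _ [_ [k [[xy Sxy <-] [k0 ->]]]].
by exists (Pobj xy), k; split => //; exists xy => //; apply: Sbar_sub.
Qed.

Lemma conv_Ybar_to_B (k : 'rV[R]_(m + 1)) c :
  @orthant R _ k -> conv_hull Ybar c -> B (obj c + k).
Proof.
move=> k0; move: c; apply: (conv_hull_min (W := [set c | B (obj c + k)])).
  exact: (@convex_affine_preimage R _ _ _ (@obj_lin R m) _ k (@conv_hull_convex R _ _)).
move=> _ [[x y] Sxy <-] /=; apply: conv_hull_sub.
by exists (obj y), k; split => //; exists (x, y).
Qed.

Lemma B_sub_objY : B `<=` msum (obj @` conv_hull Ybar) (@orthant R (m + 1)).
Proof.
apply: conv_hull_min.
  exact: (@convex_msum_image R _ _ _ (@obj_lin R m) _ _
            (@conv_hull_convex R _ Ybar) (@orthant_convex R _)).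
move=> _ [_ [k [[[x y] Sxy <-] [k0 ->]]]].
by exists (obj y), k; split => //; exists y => //; apply: conv_hull_sub; exists (x, y).
Qed.

Lemma solCP_upper_image :
  projY S `<=` closure (conv_hull Ybar) -> upper_image S = closure B.
Proof.
move=> hCP; apply/seteqP; split; last exact: closureS B_sub_Q.
rewrite /upper_image [X in _ `<=` X](closure_id (closure B)).1; last exact: closed_closure.
apply: closureS.
move=> _ [_ [k [[[x y] Sxy <-] [k0 ->]]]].
apply: (closure_transfer (C := m.+1%:R)) (hCP y (ex_intro _ x Sxy)) => // d d0 c cc yc.
rewrite PobjE; exists (obj c + k); first exact: conv_Ybar_to_B.
exact: obj_near.
Qed.

Lemma upper_image_solCP :
  upper_image S = closure B -> projY S `<=` closure (conv_hull Ybar).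
Proof.
move=> hM y [x Sxy].
have : closure B (obj y).
  rewrite -hM; apply: subset_closure; exists (Pobj (x, y)), 0; split; first by exists (x, y).
  by split; [move=> i; rewrite mxE | rewrite addr0].
apply: (closure_transfer (C := m.+1%:R)) => // d d0 a Ba ya.
have [_ [k [[c cc <-] [k0 eq_a]]]] := B_sub_objY Ba.
by exists c => //; apply: (obj_recover k0); rewrite -eq_a.
Qed.

End Solutions.

Theorem mainTheorem5 (R : realType) (n m : nat) (S : set ('rV[R]_n * 'rV[R]_m)) :
  convexS2 S ->
  forall Sbar : set ('rV[R]_n * 'rV[R]_m), Sbar `<=` S ->
    (solCP S Sbar <-> solMOCP S Sbar).
Proof.
move=> S_convex Sbar Sbar_sub; split.
- by move=> [_ hCP]; split => //; apply: solCP_upper_image.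
- by move=> [_ hM]; split => //; apply: upper_image_solCP hM.
Qed.
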